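(* Let $B$ be a Horn program, $E^+,E^-$ finite sets of ground atoms, and $H,H'\in\mathcal{H}_{D,C}$ hypotheses with $H'$ a generalization of $H$. If $size(H') > fn(H,B,E^+) + size(H)$, then $S_{MDL}(H,B,E^+,E^-) > S_{MDL}(H',B,E^+,E^-)$.
   Context: A definite clause is a clause with exactly one positive literal. A hypothesis is a finite set of definite clauses; $\mathcal{H}_{D,C}$ denotes the hypothesis space of hypotheses consistent with a declaration bias $D$ and hypothesis constraints $C$ (only membership matters). $size(H)$ is the total number of literals in $H$. $B$ is background knowledge, $E^+$ positive and $E^-$ negative examples. For a hypothesis $H$: $tp(H,B,E^+)=|\{e\in E^+ : H\cup B\models e\}|$, $tn(H,B,E^-)=|\{e\in E^- : H\cup B\not\models e\}|$, $fn(H,B,E^+)=|E^+|-tp(H,B,E^+)$, and $S_{MDL}(H,B,E^+,E^-)=tp(H,B,E^+)+tn(H,B,E^-)-size(H)$. A clause $C_1$ subsumes a clause $C_2$ iff there is a substitution $\theta$ with $C_1\theta\subseteq C_2$. A clausal theory $T_1$ subsumes $T_2$ ($T_1\preceq T_2$) iff every clause of $T_2$ is subsumed by some clause of $T_1$. $T_1$ is a generalization of $T_2$ iff $T_1\preceq T_2$, and a specialization of $T_2$ iff $T_2\preceq T_1$. *)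

From Stdlib Require Import List ZArith Classical ClassicalEpsilon.
Import ListNotations.
Set Implicit Arguments.

Inductive term : Type :=
| Var : nat -> term
| Fn  : nat -> list term -> term.

Record atom : Type := mkAtom { pred : nat ; args : list term }.

Inductive literal : Type :=
| Pos : atom -> literal
| Neg : atom -> literal.

(** A clause is a finite set (duplicate-free list) of literals, read as
    the universal closure of their disjunction. *)
Definition clause := list literal.

Definition is_pos (l : literal) : bool :=
  match l with Pos _ => true | Neg _ => false end.

Definition definite_clause (C : clause) : Prop :=
  NoDup C /\ length (filter is_pos C) = 1.

Definition horn_clause (C : clause) : Prop :=
  NoDup C /\ length (filter is_pos C) <= 1.

Definition hypothesis := list clause.

Definition hypothesis_wf (H : hypothesis) : Prop :=
  NoDup H /\ Forall definite_clause H.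

(** Membership in the hypothesis space H_{D,C}: only membership matters,
    so the space is an arbitrary predicate on (well-formed) hypotheses. *)
Definition in_space (hs : hypothesis -> Prop) (H : hypothesis) : Prop :=
  hypothesis_wf H /\ hs H.

Definition horn_program (B : list clause) : Prop :=
  NoDup B /\ Forall horn_clause B.

Fixpoint term_vars (t : term) : list nat :=
  match t with
  | Var n => [n]
  | Fn _ ts => (fix go (l : list term) : list nat :=
                  match l with [] => [] | u :: l' => term_vars u ++ go l' end) ts
  end.

Definition atom_ground (a : atom) : Prop :=
  Forall (fun t => term_vars t = []) (args a).

Definition examples (E : list atom) : Prop := NoDup E /\ Forall atom_ground E.

Definition size (H : hypothesis) : nat := fold_right (fun C n => length C + n) 0 H.

Definition subst := nat -> term.

Fixpoint term_subst (th : subst) (t : term) : term :=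
  match t with
  | Var n => th n
  | Fn f ts => Fn f (map (term_subst th) ts)
  end.

Definition atom_subst (th : subst) (a : atom) : atom :=
  mkAtom (pred a) (map (term_subst th) (args a)).

Definition lit_subst (th : subst) (l : literal) : literal :=
  match l with Pos a => Pos (atom_subst th a) | Neg a => Neg (atom_subst th a) end.

Definition subsumes (C1 C2 : clause) : Prop :=
  exists th : subst, forall l, In l (map (lit_subst th) C1) -> In l C2.

Definition theory_subsumes (T1 T2 : list clause) : Prop :=
  forall C2, In C2 T2 -> exists2 C1, In C1 T1 & subsumes C1 C2.

Definition generalization (T1 T2 : list clause) : Prop := theory_subsumes T1 T2.

Record structure : Type := {
  dom : Type ;
  dom_pt : dom ;
  fn_i : nat -> list dom -> dom ;
  pr_i : nat -> list dom -> Prop }.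

Fixpoint eval (M : structure) (rho : nat -> dom M) (t : term) : dom M :=
  match t with
  | Var n => rho n
  | Fn f ts => fn_i M f (map (eval M rho) ts)
  end.

Definition atom_sat (M : structure) (rho : nat -> dom M) (a : atom) : Prop :=
  pr_i M (pred a) (map (eval M rho) (args a)).

Definition lit_sat (M : structure) (rho : nat -> dom M) (l : literal) : Prop :=
  match l with Pos a => atom_sat M rho a | Neg a => ~ atom_sat M rho a end.

Definition clause_true (M : structure) (C : clause) : Prop :=
  forall rho : nat -> dom M, exists2 l, In l C & lit_sat M rho l.

(** T |= a  (a a ground atom; quantifying over rho = universal closure). *)
Definition entails (T : list clause) (a : atom) : Prop :=
  forall M : structure, (forall C, In C T -> clause_true M C) ->
    forall rho : nat -> dom M, atom_sat M rho a.

Definition count_P (A : Type) (P : A -> Prop) (l : list A) : nat :=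
  length (filter (fun x => if excluded_middle_informative (P x) then true else false) l).

Definition tp (H B : list clause) (Ep : list atom) : nat :=
  count_P (fun e => entails (H ++ B) e) Ep.

Definition tn (H B : list clause) (En : list atom) : nat :=
  count_P (fun e => ~ entails (H ++ B) e) En.

Definition fn (H B : list clause) (Ep : list atom) : nat :=
  length Ep - tp H B Ep.

Definition S_MDL (H B : list clause) (Ep En : list atom) : Z :=
  (Z.of_nat (tp H B Ep) + Z.of_nat (tn H B En) - Z.of_nat (size H))%Z.

(* Every model of a generalization H' of H is a model of H, so H' ∪ B entails
   every atom that H ∪ B entails: H' can only lose true negatives, and it can
   gain at most the fn(H) positives that H misses.  The score of H' therefore
   exceeds that of H by at most fn(H) + size(H) - size(H'), which is negative. *)
From Stdlib Require Import List ZArith Lia ClassicalEpsilon.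
Set Implicit Arguments.

Lemma eval_term_subst (M : structure) (rho : nat -> dom M) (th : subst) (t : term) :
  eval M rho (term_subst th t) = eval M (fun n => eval M rho (th n)) t.
Proof.
  revert t; fix IH 1; intros [n | f ts]; simpl; [reflexivity |].
  f_equal; induction ts as [| u ts IHts]; simpl; [reflexivity |].
  now rewrite IH, IHts.
Qed.

Lemma atom_sat_subst (M : structure) (rho : nat -> dom M) (th : subst) (a : atom) :
  atom_sat M rho (atom_subst th a) <-> atom_sat M (fun n => eval M rho (th n)) a.
Proof.
  unfold atom_sat, atom_subst; simpl.
  rewrite map_map, (map_ext _ _ (eval_term_subst M rho th)).
  reflexivity.
Qed.

Lemma lit_sat_subst (M : structure) (rho : nat -> dom M) (th : subst) (l : literal) :
  lit_sat M rho (lit_subst th l) <-> lit_sat M (fun n => eval M rho (th n)) l.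
Proof. destruct l; simpl; rewrite atom_sat_subst; reflexivity. Qed.

Lemma clause_true_subsumes (M : structure) (C1 C2 : clause) :
  subsumes C1 C2 -> clause_true M C1 -> clause_true M C2.
Proof.
  intros [th Hsub] HC1 rho.
  destruct (HC1 (fun n => eval M rho (th n))) as [l Hl Hsat].
  exists (lit_subst th l).
  - apply Hsub, in_map, Hl.
  - apply lit_sat_subst, Hsat.
Qed.

Lemma theory_subsumes_true (M : structure) (T1 T2 : list clause) :
  theory_subsumes T1 T2 ->
  (forall C, In C T1 -> clause_true M C) -> forall C, In C T2 -> clause_true M C.
Proof.
  intros Hsub HT1 C2 HC2.
  destruct (Hsub C2 HC2) as [C1 HC1 Hs].
  exact (clause_true_subsumes Hs (HT1 C1 HC1)).
Qed.

Lemma entails_generalization (H H' B : list clause) (e : atom) :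
  generalization H' H -> entails (H ++ B) e -> entails (H' ++ B) e.
Proof.
  intros Hgen He M HM; apply He.
  intros C HC; apply in_app_or in HC as [HC | HC].
  - refine (theory_subsumes_true Hgen _ C HC).
    intros C' HC'; apply HM, in_or_app; left; exact HC'.
  - apply HM, in_or_app; right; exact HC.
Qed.

Lemma count_P_mono (A : Type) (P Q : A -> Prop) (l : list A) :
  (forall x, P x -> Q x) -> count_P P l <= count_P Q l.
Proof.
  intros HPQ; unfold count_P; induction l as [| x l IH]; simpl; [lia |].
  destruct (excluded_middle_informative (P x)) as [HP | HP];
    destruct (excluded_middle_informative (Q x)) as [HQ | HQ]; simpl; try lia.
  exfalso; exact (HQ (HPQ x HP)).
Qed.

Lemma count_P_le_length (A : Type) (P : A -> Prop) (l : list A) :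
  count_P P l <= length l.
Proof. apply filter_length_le. Qed.

Lemma tn_generalization_le (H H' B : list clause) (En : list atom) :
  generalization H' H -> tn H' B En <= tn H B En.
Proof.
  intros Hgen; apply count_P_mono.
  intros e Hn He; exact (Hn (entails_generalization B Hgen He)).
Qed.

Lemma fn_add_tp (H B : list clause) (Ep : list atom) :
  fn H B Ep + tp H B Ep = length Ep.
Proof.
  unfold fn; pose proof (count_P_le_length (fun e => entails (H ++ B) e) Ep).
  unfold tp; lia.
Qed.

Theorem proposition4p12 (hs : hypothesis -> Prop) (B : list clause)
  (Ep En : list atom) (H H' : hypothesis) :
  horn_program B -> examples Ep -> examples En ->
  in_space hs H -> in_space hs H' ->
  generalization H' H ->
  size H' > fn H B Ep + size H ->
  (S_MDL H B Ep En > S_MDL H' B Ep En)%Z.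
Proof.
  intros _ _ _ _ _ Hgen Hsize.
  pose proof (tn_generalization_le B En Hgen) as Htn.
  pose proof (count_P_le_length (fun e => entails (H' ++ B) e) Ep) as Htp'.
  pose proof (fn_add_tp H B Ep) as Hfn.
  unfold S_MDL, tp in *; lia.
Qed.
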